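(* Let $E_8$ denote the complex simple simply-connected Lie group of type $E_8$, with Lie algebra $\mathfrak{e}_8$, simple roots $\alpha_1,\dots,\alpha_8$, fundamental weights $\omega_1,\dots,\omega_8$, and fundamental characters $\chi_1,\dots,\chi_8$ ($\chi_l$ the character of the irreducible representation with highest weight $\omega_l$). For each $k$ with $0\le k\le 248$, let $N^{(k)}_\iota\in\mathbb{Z}$, $\iota\in\mathbb{Z}_{\ge 0}^8$, be the unique integers (finitely many nonzero) such that $$\chi_{\wedge^k \mathfrak{e}_8}=\sum_{\iota\in\mathbb{Z}_{\ge0}^8} N^{(k)}_\iota \prod_{l=1}^8 \chi_l^{\iota_l}$$ in the representation ring $\mathrm{Rep}(E_8)\cong\mathbb{Z}[\chi_1,\dots,\chi_8]$, where $\wedge^k\mathfrak{e}_8$ is the $k$-th exterior power of the adjoint representation. Let $e_{jk}$ denote the coefficient of $\alpha_k$ in the expansion of $\omega_j$ in the basis of simple roots (i.e. $e_{jk}=(C^{-1})_{jk}$, with $C$ the Cartan matrix of $E_8$), and define the set of admissible exponents $$\mathfrak{I}=\Big\{\iota\in\mathbb{Z}_{\ge0}^8 \;\Big|\; \sum_{j=1}^8 \iota_j e_{jk}\le 2\sum_{j=1}^8 e_{jk}\ \text{ for all } k=1,\dots,8\Big\}.$$ Then for every $\iota\in\mathbb{Z}_{\ge0}^8$ with $\iota\notin\mathfrak{I}$, one has $N^{(k)}_\iota=0$ for all $k$.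
   Context: The representation ring $\mathrm{Rep}(E_8)$ (equivalently the ring of Weyl-invariant regular functions on the maximal torus, via characters) is the polynomial ring over $\mathbb{Z}$ in the fundamental characters $\chi_1,\dots,\chi_8$, so the coefficients $N^{(k)}_\iota$ are well defined. The labelling of simple roots, fundamental weights and fundamental characters is any fixed one, used consistently (fundamental weight $\omega_j$ dual to the simple coroot of $\alpha_j$). Note that $2\sum_j e_{jk}$ is the $\alpha_k$-coefficient of $2\rho=2\sum_j\omega_j$, so $\iota\in\mathfrak{I}$ means that $2\rho-\sum_j\iota_j\omega_j$ has nonnegative coefficients in the simple-root basis. *)

From HB Require Import structures.
From mathcomp Require Import all_boot all_order all_algebra.
Set Implicit Arguments. Unset Strict Implicit. Unset Printing Implicit Defensive.
Import Order.TTheory GRing.Theory Num.Theory.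
Local Open Scope ring_scope.

(** Labelling of the E8 Dynkin diagram (Bourbaki, 0-indexed):
    chain 0-2-3-4-5-6-7 and node 1 attached to node 3. *)
Definition adjE8 (i j : nat) : bool :=
  let e a b := ((i == a) && (j == b)) || ((i == b) && (j == a)) in
  [|| e 0 2, e 2 3, e 3 4, e 4 5, e 5 6, e 6 7 | e 1 3]%N.

Definition CartanE8 : 'M[int]_8 :=
  \matrix_(i < 8, j < 8)
    (if i == j then (2 : int) else if adjE8 i j then (-1 : int) else (0 : int)).

(** Weight lattice P, in coordinates w.r.t. the fundamental weights
    omega_1..omega_8 (for E8 the weight lattice equals the root lattice). *)
Definition wt := 'rV[int]_8.

Definition omega (l : 'I_8) : wt := \row_(j < 8) (if j == l then (1 : int) else (0 : int)).
Definition rho : wt := \row_(j < 8) (1 : int).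

Definition salpha (i : 'I_8) : wt := row i CartanE8.

Definition refl (i : 'I_8) (mu : wt) : wt := mu - (mu 0 i) *: salpha i.

Definition strictly_dominant (mu : wt) : bool := [forall j, 0 < mu 0 j].

(** Roots of E8: elements of the root lattice of squared length 2, where
    beta = c *m C (c = coordinates in the simple-root basis) and
    (beta, beta) = c C c^T. *)
Definition is_root (beta : wt) : Prop :=
  exists c : 'rV[int]_8, beta = c *m CartanE8 /\ (c *m CartanE8 *m c^T) 0 0 = 2.

(** The group ring Z[P]: formal finite Z-linear combinations of e^mu,
    represented by lists of (weight, coefficient); two such are equal in
    Z[P] iff their coefficient functions agree. *)
Definition elt := seq (wt * int).
Definition coef (f : elt) (mu : wt) : int := \sum_(p <- f | p.1 == mu) p.2.
Definition eeq (f g : elt) : Prop := forall mu, coef f mu = coef g mu.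
Definition eexp (mu : wt) : elt := [:: (mu, 1)].
Definition eone : elt := eexp 0.
Definition eadd (f g : elt) : elt := f ++ g.
Definition escale (c : int) (f : elt) : elt := [seq (p.1, c * p.2) | p <- f].
Definition emul (f g : elt) : elt := [seq (p.1 + q.1, p.2 * q.2) | p <- f, q <- g].
Definition epow (f : elt) (n : nat) : elt := iter n (emul f) eone.

(** W-alternating sums A_mu = sum_{w in W} sgn(w) e^{w mu}, for mu strictly
    dominant: the unique W-anti-invariant element whose restriction to the
    strictly dominant weights is e^mu. *)
Definition alt_sum (mu : wt) (f : elt) : Prop :=
  [/\ (forall (i : 'I_8) (nu : wt), coef f (refl i nu) = - coef f nu),
      coef f mu = 1 &
      (forall nu : wt, strictly_dominant nu -> nu != mu -> coef f nu = 0)].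

(** chi is the character of the irreducible representation of highest
    weight lambda (Weyl character formula: chi * A_rho = A_{lambda+rho}). *)
Definition irr_char (lambda : wt) (chi : elt) : Prop :=
  exists a b : elt, [/\ alt_sum rho a, alt_sum (lambda + rho) b & eeq (emul chi a) b].

(** Elementary symmetric function e_k(e^{w_1},...,e^{w_n}): the character of
    the k-th exterior power of a representation with weights w_1..w_n
    (listed with multiplicity). *)
Fixpoint elemsym (k : nat) (ws : seq wt) : elt :=
  match k, ws with
  | 0%N, _ => eone
  | k'.+1, [::] => [::]
  | k'.+1, w :: ws' => eadd (elemsym k ws') (emul (eexp w) (elemsym k' ws'))
  end.

Definition adjoint_weights (rts : seq wt) : seq wt := rts ++ nseq 8 0.

Definition expo := {ffun 'I_8 -> nat}.

Definition emonom (chi : 'I_8 -> elt) (iota : expo) : elt :=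
  foldr emul eone [seq epow (chi l) (iota l) | l <- enum 'I_8].

Definition expand (chi : 'I_8 -> elt) (S : seq expo) (N : expo -> int) : elt :=
  flatten [seq escale (N iota) (emonom chi iota) | iota <- S].

Definition CinvE8 : 'M[rat]_8 := invmx (map_mx (fun z : int => z%:~R) CartanE8).
Definition e_coef (j k : 'I_8) : rat := CinvE8 j k.

Definition admissible (iota : expo) : Prop :=
  forall k : 'I_8,
    \sum_(j < 8) (iota j)%:R * e_coef j k <= 2 * \sum_(j < 8) e_coef j k.

From mathcomp Require Import all_boot all_order all_algebra.
From mathcomp Require Import ring zify.
Set Implicit Arguments. Unset Strict Implicit. Unset Printing Implicit Defensive.
Import Order.TTheory GRing.Theory Num.Theory.
Local Open Scope ring_scope.

(* Fix a coordinate k and order the weights lexicographically by their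
   simple-root coordinates, the alpha_k-coordinate first; positive multiples of
   simple roots are positive for this order.  A W-alternating sum A_mu has
   e^mu as its highest term, so by the Weyl character formula chi_l has leading
   term e^omega_l and the monomial prod_l chi_l^iota_l has leading term
   e^(sum_l iota_l omega_l).  Hence the highest weight sum_l iota_l omega_l with
   N_iota <> 0 survives in the expansion, so it is a weight of the exterior
   power, i.e. a sum of distinct roots.  Its alpha_k-coordinate is therefore at
   most that of the sum of the positive roots, which is 2 rho, and it dominates
   the alpha_k-coordinate of every sum_l iota_l omega_l with N_iota <> 0. *)

Definition supp (f : elt) : seq wt := [seq x <- undup (map fst f) | coef f x != 0].

Lemma coef_cat f g mu : coef (f ++ g) mu = coef f mu + coef g mu.
Proof. by rewrite /coef big_cat. Qed.

Lemma coef_escale c f mu : coef (escale c f) mu = c * coef f mu.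
Proof. by rewrite /coef /escale big_map big_distrr. Qed.

Lemma coef_flatten (L : seq elt) mu : coef (flatten L) mu = \sum_(f <- L) coef f mu.
Proof.
elim: L => [|f L IH]; first by rewrite big_nil /coef big_nil.
by rewrite big_cons coef_cat IH.
Qed.

Lemma coef_neq0_mem f mu : coef f mu != 0 -> mu \in map fst f.
Proof.
apply: contraR => mu_f; apply/eqP; rewrite /coef big1_seq // => p /andP[/eqP p_mu pf].
by rewrite -p_mu map_f in mu_f.
Qed.

Lemma mem_supp f mu : (mu \in supp f) = (coef f mu != 0).
Proof. by rewrite mem_filter mem_undup andb_idr //; apply: coef_neq0_mem. Qed.

Lemma sum_supp f (h : wt -> int) :
  \sum_(p <- f) p.2 * h p.1 = \sum_(x <- supp f) coef f x * h x.
Proof.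
rewrite /supp big_filter.
transitivity (\sum_(x <- undup (map fst f)) \sum_(p <- f) (if p.1 == x then p.2 * h p.1 else 0)).
  rewrite exchange_big /=; apply: eq_big_seq => p pf.
  rewrite (bigD1_seq p.1) ?undup_uniq ?mem_undup ?map_f //= eqxx big1 ?addr0 // => x.
  by rewrite eq_sym => /negbTE ->.
rewrite [RHS]big_mkcond; apply: eq_bigr => x _.
have -> : \sum_(p <- f) (if p.1 == x then p.2 * h p.1 else 0) = coef f x * h x.
  by rewrite /coef big_distrl [RHS]big_mkcond; apply: eq_bigr => p _; case: eqP => // ->.
by have [->|] := eqVneq (coef f x) 0; rewrite ?mul0r.
Qed.

Lemma coef_emul f g mu :
  coef (emul f g) mu = \sum_(x <- supp f) coef f x * coef g (mu - x).
Proof.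
rewrite -(sum_supp f (fun x => coef g (mu - x))).
elim: f => [|p f IH]; first by rewrite big_nil /coef big_nil.
rewrite big_cons /emul /= coef_cat -/(emul f g) IH /coef big_map big_distrr /=.
congr (_ + _); apply: eq_bigl => q /=.
by rewrite -(inj_eq (addrI (- p.1))) addKr addrC.
Qed.

Section ConeOrder.
Variables (V : zmodType) (Pos : pred V).
Hypothesis Pos_add : forall a b, Pos a -> Pos b -> Pos (a + b).
Hypothesis Pos0 : ~~ Pos 0.
Hypothesis Pos_total : forall d, d != 0 -> Pos d || Pos (- d).

Definition cone_le (a b : V) := (a == b) || Pos (b - a).

Lemma cone_le_refl a : cone_le a a.
Proof. by rewrite /cone_le eqxx. Qed.

Lemma cone_le_trans b a c : cone_le a b -> cone_le b c -> cone_le a c.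
Proof.
rewrite /cone_le => /orP[/eqP->//|ab] /orP[/eqP<-|bc]; first by rewrite ab orbT.
by have := Pos_add bc ab; rewrite addrA subrK => ->; rewrite orbT.
Qed.

Lemma cone_le_anti a b : cone_le a b -> cone_le b a -> a = b.
Proof.
rewrite /cone_le => /orP[/eqP//|ab] /orP[/eqP//|ba].
by have := Pos_add ab ba; rewrite addrA subrK subrr (negbTE Pos0).
Qed.

Lemma cone_le_total a b : cone_le a b || cone_le b a.
Proof.
rewrite /cone_le; have [//|ne] := eqVneq a b.
have /Pos_total : b - a != 0 by rewrite subr_eq0 eq_sym.
by rewrite opprB => /orP[] ->; rewrite ?orbT.
Qed.

Lemma cone_leD2r c a b : cone_le (a + c) (b + c) = cone_le a b.
Proof. by rewrite /cone_le (inj_eq (addIr c)) opprD addrACA subrr addr0. Qed.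

Lemma cone_leD a b c d : cone_le a b -> cone_le c d -> cone_le (a + c) (b + d).
Proof.
move=> ab cd; apply: (@cone_le_trans (b + c)); first by rewrite cone_leD2r.
by rewrite !(addrC b) cone_leD2r.
Qed.

Lemma cone_exists_max (T : eqType) (s : seq T) (F : T -> V) : s != [::] ->
  exists2 y, y \in s & forall x, x \in s -> cone_le (F x) (F y).
Proof.
elim: s => [//|a [|b s] IH] _.
  by exists a => [|x]; rewrite ?mem_seq1 // => /eqP->; apply: cone_le_refl.
have [y ys ymax] := IH isT.
case/orP: (cone_le_total (F a) (F y)) => [ay|ya].
  exists y => [|x]; first by rewrite in_cons ys orbT.
  by rewrite in_cons => /orP[/eqP->//|]; apply: ymax.
exists a => [|x]; first by rewrite mem_head.
rewrite in_cons => /orP[/eqP->|/ymax xy]; first exact: cone_le_refl.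
exact: cone_le_trans xy ya.
Qed.

End ConeOrder.

Section LeadingTerms.
Variable Pos : pred wt.
Hypothesis Pos_add : forall a b, Pos a -> Pos b -> Pos (a + b).
Hypothesis Pos0 : ~~ Pos 0.
Hypothesis Pos_total : forall d, d != 0 -> Pos d || Pos (- d).
Hypothesis Pos_salpha : forall (i : 'I_8) (c : int), 0 < c -> Pos (c *: salpha i).

Local Notation "a <=c b" := (cone_le Pos a b) (at level 70).
Let le_anti := cone_le_anti Pos_add Pos0.

Definition supp_ub (f : elt) (m : wt) := forall nu, coef f nu != 0 -> nu <=c m.
Definition lead_term (f : elt) (m : wt) := coef f m = 1 /\ supp_ub f m.

Lemma exists_supp_max f : supp f != [::] -> exists2 m, coef f m != 0 & supp_ub f m.
Proof.
move=> /(cone_exists_max Pos_add Pos_total id)[m]; rewrite mem_supp => fm m_max.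
by exists m => // nu; rewrite -mem_supp; apply: m_max.
Qed.

Lemma coef_emul_ub f g m n : supp_ub f m -> supp_ub g n ->
  coef (emul f g) (m + n) = coef f m * coef g n.
Proof.
move=> f_ub g_ub; rewrite coef_emul.
have off_m x : x != m -> coef f x * coef g (m + n - x) = 0.
  move=> xm; apply/eqP; apply: contraR xm; rewrite mulf_eq0 negb_or => /andP[fx gx].
  apply/eqP/le_anti; first exact: f_ub.
  by rewrite -(cone_leD2r Pos (n - x)) addrA [x + _]addrC subrK; apply: g_ub.
have [fm|fm] := boolP (m \in supp f).
  rewrite (bigD1_seq m) ?filter_uniq ?undup_uniq //= big1_seq ?addr0.
    by rewrite addrAC subrr add0r.
  by move=> x /andP[xm _]; apply: off_m.
move: fm; rewrite mem_supp negbK => /eqP fm.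
rewrite fm mul0r big1_seq // => x _.
by have [->|] := eqVneq x m; [rewrite fm mul0r | apply: off_m].
Qed.

Lemma supp_ub_emul f g m n : supp_ub f m -> supp_ub g n -> supp_ub (emul f g) (m + n).
Proof.
move=> f_ub g_ub nu; rewrite coef_emul => nz.
have [x _] : exists2 x, x \in supp f & coef f x * coef g (nu - x) != 0.
  apply/hasP; apply: contraR nz => /hasPn zero; rewrite big1_seq // => x /andP[_ xf].
  by apply/eqP; move: (zero x xf); rewrite negbK.
rewrite mulf_eq0 negb_or => /andP[fx gx].
by have := cone_leD Pos_add (f_ub _ fx) (g_ub _ gx); rewrite addrC subrK.
Qed.

Lemma lead_term_emul f g m n : lead_term f m -> lead_term g n -> lead_term (emul f g) (m + n).
Proof.
move=> [fm f_ub] [gn g_ub]; split; last exact: supp_ub_emul.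
by rewrite coef_emul_ub // fm gn mulr1.
Qed.

Lemma lead_term_eone : lead_term eone 0.
Proof.
have coef_eone nu : coef eone nu = (0 == nu)%:R.
  by rewrite /coef big_cons big_nil /=; case: eqP; rewrite ?addr0.
split=> [|nu]; first by rewrite coef_eone eqxx.
by rewrite coef_eone; have [<- _|_] := eqVneq 0 nu; rewrite ?cone_le_refl ?eqxx.
Qed.

Lemma lead_term_epow f m n : lead_term f m -> lead_term (epow f n) (m *+ n).
Proof.
move=> fm; elim: n => [|n IH]; first exact: lead_term_eone.
by rewrite /epow iterS mulrS; apply: lead_term_emul.
Qed.

Lemma lead_term_prod (I : Type) (s : seq I) (F : I -> elt) (G : I -> wt) :
  (forall i, lead_term (F i) (G i)) ->
  lead_term (foldr emul eone (map F s)) (\sum_(i <- s) G i).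
Proof.
move=> FG; elim: s => [|i s IH]; first by rewrite big_nil; apply: lead_term_eone.
by rewrite big_cons; apply: lead_term_emul.
Qed.

Lemma alt_sum_ub mu f : alt_sum mu f -> supp_ub f mu.
Proof.
case=> f_anti f_mu f_sd.
have [m fm m_ub] : exists2 m, coef f m != 0 & supp_ub f m.
  by apply: exists_supp_max; apply/eqP => f0; have := mem_supp f mu; rewrite f0 f_mu.
suff -> : mu = m by [].
apply/eqP; apply: contraT => mu_m.
(* If m_i <= 0 then s_i m >= m is in the support too, so s_i m = m, which kills
   the coefficient of m by anti-invariance. *)
have m_sd : strictly_dominant m.
  apply/forallP => i; rewrite ltNge; apply/negP => mi_le0.
  have m_le_refl : m <=c refl i m.
    case: (ltgtP (m 0 i) 0) mi_le0 => // [mi_lt0 _ | mi0 _].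
      by apply/orP; right; rewrite /refl addrAC subrr add0r -scaleNr Pos_salpha ?oppr_gt0.
    by rewrite /refl mi0 scale0r subr0 cone_le_refl.
  have refl_m : refl i m = m by apply: le_anti (m_ub _ _) m_le_refl; rewrite f_anti oppr_eq0.
  move: fm; have := f_anti i m; rewrite refl_m => /eqP.
  by rewrite -subr_eq0 opprK -mulr2n mulrn_eq0 /= => ->.
by move: fm; rewrite f_sd 1?eq_sym ?eqxx.
Qed.

Lemma irr_char_lead lam chi : irr_char lam chi -> lead_term chi lam.
Proof.
case=> a [b [Ha Hb chi_a]].
have a_ub := alt_sum_ub Ha; have b_ub := alt_sum_ub Hb.
case: Ha => _ a_rho _; case: Hb => _ b_top _.
have [m chi_m m_ub] : exists2 m, coef chi m != 0 & supp_ub chi m.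
  apply: exists_supp_max; apply/eqP => chi0.
  by have := chi_a (lam + rho); rewrite coef_emul chi0 big_nil b_top.
have top_m : coef (emul chi a) (m + rho) = coef chi m by rewrite coef_emul_ub // a_rho mulr1.
have m_lam : m + rho <=c lam + rho by apply: b_ub; rewrite -chi_a top_m.
have lam_m : lam + rho <=c m + rho by apply: (supp_ub_emul m_ub a_ub); rewrite chi_a b_top.
rewrite !cone_leD2r in m_lam lam_m; have E := le_anti m_lam lam_m; subst m.
by split=> //; rewrite -top_m chi_a.
Qed.

Lemma coef_lincomb_max (I : eqType) (S : seq I) (N : I -> int) (F : I -> elt)
    (w : I -> wt) y :
  uniq S -> injective w -> (forall x, lead_term (F x) (w x)) -> y \in S ->
  (forall x, x \in S -> N x != 0 -> w x <=c w y) ->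
  coef (flatten [seq escale (N x) (F x) | x <- S]) (w y) = N y.
Proof.
move=> uS w_inj F_lead yS y_max.
rewrite coef_flatten big_map (bigD1_seq y) //= coef_escale (F_lead y).1 mulr1.
rewrite big1_seq ?addr0 // => x /andP[xy xS]; rewrite coef_escale.
have [->|Nx] := eqVneq (N x) 0; first by rewrite mul0r.
have [->|Fx] := eqVneq (coef (F x) (w y)) 0; first by rewrite mulr0.
by have /w_inj exy := le_anti (y_max x xS Nx) ((F_lead x).2 _ Fx); rewrite exy eqxx in xy.
Qed.

End LeadingTerms.

Section BilinearForm.
Variables (n : nat) (A : 'M[int]_n).

Definition bform (x y : 'rV[int]_n) : int := (x *m A *m y^T) 0 0.
Definition qform (x : 'rV[int]_n) : int := bform x x.

Lemma bformBl x y z : bform (x - y) z = bform x z - bform y z.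
Proof. by rewrite /bform !mulmxBl !mxE. Qed.

Lemma bformBr x y z : bform x (y - z) = bform x y - bform x z.
Proof. by rewrite /bform linearB /= mulmxBr !mxE. Qed.

Lemma bformZl c x y : bform (c *: x) y = c * bform x y.
Proof. by rewrite /bform -!scalemxAl mxE. Qed.

Lemma bformZr c x y : bform x (c *: y) = c * bform x y.
Proof. by rewrite /bform linearZ /= -scalemxAr mxE. Qed.

Lemma bform_unit x i : bform x 'e_i = (x *m A) 0 i.
Proof. by rewrite /bform trmx_delta -colE mxE. Qed.

Lemma qform_unitZ c i : qform (c *: 'e_i) = c * c * A i i.
Proof. by rewrite /qform bformZl bformZr bform_unit -rowE mxE mulrA. Qed.

Hypothesis A_sym : A^T = A.

Lemma bformC x y : bform x y = bform y x.
Proof.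
have tr (M : 'M[int]_1) : M 0 0 = M^T 0 0 by rewrite mxE.
by rewrite /bform tr !trmx_mul trmxK A_sym mulmxA.
Qed.

Lemma qformB x y : qform (x - y) = qform x + qform y - 2 * bform x y.
Proof. by rewrite /qform !(bformBl, bformBr) [bform y x]bformC; ring. Qed.

Lemma qform_refl x i : A i i = 2 -> qform (x - (x *m A) 0 i *: 'e_i) = qform x.
Proof. by move=> Aii; rewrite qformB qform_unitZ bformZr bform_unit Aii; ring. Qed.

Hypothesis A_offdiag : forall i j, i != j -> A i j <= 0.

Lemma bform_disjoint_le0 (x y : 'rV[int]_n) :
  (forall j, 0 <= x 0 j) -> (forall j, 0 <= y 0 j) -> (forall j, x 0 j * y 0 j = 0) ->
  bform x y <= 0.
Proof.
move=> x_ge0 y_ge0 xy; rewrite /bform mxE; apply: sumr_le0 => j _.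
rewrite !mxE big_distrl /=; apply: sumr_le0 => k _.
have [->|kj] := eqVneq k j; first by rewrite mulrAC xy mul0r.
by rewrite -mulrA mulr_ge0_le0 // mulr_le0_ge0 // A_offdiag.
Qed.

Hypothesis A_definite : forall x, x != 0 -> 2 <= qform x.

Lemma qform_eq2_sign (x : 'rV[int]_n) :
  qform x = 2 -> (forall j, 0 <= x 0 j) \/ (forall j, x 0 j <= 0).
Proof.
move=> qx2; pose p := \row_j Num.max (x 0 j) 0; pose q := p - x.
have p_ge0 j : 0 <= p 0 j by rewrite mxE le_max lexx orbT.
have q_ge0 j : 0 <= q 0 j by rewrite !mxE subr_ge0 le_max lexx.
have pq j : p 0 j * q 0 j = 0.
  by rewrite !mxE; case: leP => _; rewrite ?subrr ?mulr0 ?mul0r.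
have qx : qform x = qform p + qform q - 2 * bform p q.
  by rewrite -qformB /q opprB addrC subrK.
have pq_le0 := bform_disjoint_le0 p_ge0 q_ge0 pq.
have [p0|/A_definite p2] := eqVneq p 0.
  by right=> j; move/rowP/(_ j): p0; rewrite !mxE => <-; rewrite le_max lexx.
have [q0|/A_definite q2] := eqVneq q 0.
  by left=> j; move/rowP/(_ j): q0; rewrite !mxE => /subr0_eq <-; rewrite le_max lexx orbT.
lia.
Qed.

End BilinearForm.

Local Notation ord8 k := (@Ordinal 8 k isT).

Lemma sum_ord8 (V : nmodType) (F : 'I_8 -> V) : \sum_(j < 8) F j =
  F (ord8 0) + F (ord8 1) + F (ord8 2) + F (ord8 3)
  + F (ord8 4) + F (ord8 5) + F (ord8 6) + F (ord8 7).
Proof.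
rewrite !big_ord_recl big_ord0 addr0 !addrA.
by congr (_ + _ + _ + _ + _ + _ + _ + _); congr F; apply: val_inj.
Qed.

Lemma row8_eq0 (x : 'rV[int]_8) :
  [&& x 0 (ord8 0) == 0, x 0 (ord8 1) == 0, x 0 (ord8 2) == 0, x 0 (ord8 3) == 0,
      x 0 (ord8 4) == 0, x 0 (ord8 5) == 0, x 0 (ord8 6) == 0 & x 0 (ord8 7) == 0] -> x = 0.
Proof.
move=> /and5P[/eqP x0 /eqP x1 /eqP x2 /eqP x3 /and4P[/eqP x4 /eqP x5 /eqP x6 /eqP x7]].
apply/rowP => -[j lt_j8]; rewrite mxE.
by case: j lt_j8 => [|[|[|[|[|[|[|[|//]]]]]]]] lt_j8; rewrite (bool_irrelevance lt_j8 isT).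
Qed.

Definition invCartanE8 : 'M[int]_8 := \matrix_(i < 8, j < 8) nth 0 (nth [::]
  [:: [:: 4; 5; 7; 10; 8; 6; 4; 2]; [:: 5; 8; 10; 15; 12; 9; 6; 3];
      [:: 7; 10; 14; 20; 16; 12; 8; 4]; [:: 10; 15; 20; 30; 24; 18; 12; 6];
      [:: 8; 12; 16; 24; 20; 15; 10; 5]; [:: 6; 9; 12; 18; 15; 12; 8; 4];
      [:: 4; 6; 8; 12; 10; 8; 6; 3]; [:: 2; 3; 4; 6; 5; 4; 3; 2]] i) j.

Lemma CartanE8K : CartanE8 *m invCartanE8 = 1%:M.
Proof.
apply/matrixP => i j; rewrite !mxE !big_ord_recl big_ord0 !mxE /=.
by case: i j => [[|[|[|[|[|[|[|[|//]]]]]]]] ?] [[|[|[|[|[|[|[|[|//]]]]]]]] ?].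
Qed.

Lemma invCartanE8K : invCartanE8 *m CartanE8 = 1%:M.
Proof. exact: mulmx1C CartanE8K. Qed.

Lemma CinvE8E : CinvE8 = map_mx intr invCartanE8.
Proof.
have CC : map_mx (intr : int -> rat) CartanE8 *m map_mx intr invCartanE8 = 1%:M.
  by rewrite -map_mxM CartanE8K map_mx1.
have [unitC _] := mulmx1_unit CC.
by rewrite /CinvE8 -[RHS](mulKmx unitC) CC mulmx1.
Qed.

Lemma tr_CartanE8 : CartanE8^T = CartanE8.
Proof.
apply/matrixP => i j; rewrite !mxE /=.
by case: i j => [[|[|[|[|[|[|[|[|//]]]]]]]] ?] [[|[|[|[|[|[|[|[|//]]]]]]]] ?].
Qed.

Lemma CartanE8_diag i : CartanE8 i i = 2.
Proof. by rewrite mxE eqxx. Qed.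

Lemma CartanE8_offdiag i j : i != j -> CartanE8 i j <= 0.
Proof. by rewrite mxE => /negbTE ->; case: adjE8. Qed.

Definition E8form (x0 x1 x2 x3 x4 x5 x6 x7 : int) : int :=
  x0 * x0 + x1 * x1 + x2 * x2 + x3 * x3 + x4 * x4 + x5 * x5 + x6 * x6 + x7 * x7
  - (x0 * x2 + x2 * x3 + x3 * x4 + x4 * x5 + x5 * x6 + x6 * x7 + x1 * x3).

Lemma qform_CartanE8 x : qform CartanE8 x = 2 * E8form (x 0 (ord8 0)) (x 0 (ord8 1))
  (x 0 (ord8 2)) (x 0 (ord8 3)) (x 0 (ord8 4)) (x 0 (ord8 5)) (x 0 (ord8 6)) (x 0 (ord8 7)).
Proof. rewrite /qform /bform !mxE sum_ord8 !mxE !sum_ord8 !mxE /= /E8form; ring. Qed.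

(* Completing squares along the Dynkin diagram, from the leaves 0, 1, 7 towards
   the branch node 3. *)
Lemma E8form_sos x0 x1 x2 x3 x4 x5 x6 x7 : 120 * E8form x0 x1 x2 x3 x4 x5 x6 x7 =
  30 * (2 * x0 - x2) ^+ 2 + 10 * (3 * x2 - 2 * x3) ^+ 2 + 30 * (2 * x1 - x3) ^+ 2
  + 30 * (2 * x7 - x6) ^+ 2 + 10 * (3 * x6 - 2 * x5) ^+ 2 + 5 * (4 * x5 - 3 * x4) ^+ 2
  + 3 * (5 * x4 - 4 * x3) ^+ 2 + 2 * x3 ^+ 2.
Proof. rewrite /E8form; ring. Qed.

Lemma E8form_le0 x0 x1 x2 x3 x4 x5 x6 x7 : E8form x0 x1 x2 x3 x4 x5 x6 x7 <= 0 ->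
  [&& x0 == 0, x1 == 0, x2 == 0, x3 == 0, x4 == 0, x5 == 0, x6 == 0 & x7 == 0].
Proof.
move=> le0; have sos := E8form_sos x0 x1 x2 x3 x4 x5 x6 x7.
have : [&& (2 * x0 - x2) ^+ 2 == 0, (3 * x2 - 2 * x3) ^+ 2 == 0, (2 * x1 - x3) ^+ 2 == 0,
  (2 * x7 - x6) ^+ 2 == 0, (3 * x6 - 2 * x5) ^+ 2 == 0, (4 * x5 - 3 * x4) ^+ 2 == 0,
  (5 * x4 - 4 * x3) ^+ 2 == 0 & x3 ^+ 2 == 0].
  move: sos le0 (sqr_ge0 (2 * x0 - x2)) (sqr_ge0 (3 * x2 - 2 * x3)) (sqr_ge0 (2 * x1 - x3))
    (sqr_ge0 (2 * x7 - x6)) (sqr_ge0 (3 * x6 - 2 * x5)) (sqr_ge0 (4 * x5 - 3 * x4))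
    (sqr_ge0 (5 * x4 - 4 * x3)) (sqr_ge0 x3).
  (* With the squares generalized, this is linear arithmetic. *)
  move: (E8form _ _ _ _ _ _ _ _) ((2 * x0 - x2) ^+ 2) ((3 * x2 - 2 * x3) ^+ 2)
    ((2 * x1 - x3) ^+ 2) ((2 * x7 - x6) ^+ 2) ((3 * x6 - 2 * x5) ^+ 2)
    ((4 * x5 - 3 * x4) ^+ 2) ((5 * x4 - 4 * x3) ^+ 2) (x3 ^+ 2).
  lia.
rewrite !sqrf_eq0 => /and5P[/eqP ? /eqP ? /eqP ? /eqP ? /and4P[/eqP ? /eqP ? /eqP ? /eqP ?]].
clear sos le0.
by apply/and5P; split; [..|apply/and4P; split]; apply/eqP; lia.
Qed.

Lemma qform_CartanE8_ge2 x : x != 0 -> 2 <= qform CartanE8 x.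
Proof.
apply: contraNT; rewrite -ltNge qform_CartanE8 => lt2.
by apply/eqP/row8_eq0/E8form_le0; lia.
Qed.

Definition alpha_coord : {linear wt -> 'rV[int]_8} := mulmxr invCartanE8.

Lemma alpha_coordK c : alpha_coord (c *m CartanE8) = c.
Proof. by rewrite /= -mulmxA CartanE8K mulmx1. Qed.

Lemma alpha_coordKV mu : alpha_coord mu *m CartanE8 = mu.
Proof. by rewrite /= -mulmxA invCartanE8K mulmx1. Qed.

Lemma alpha_coord_inj : injective alpha_coord.
Proof. by move=> a b e; rewrite -(alpha_coordKV a) e alpha_coordKV. Qed.

Lemma alpha_coord_salpha i : alpha_coord (salpha i) = 'e_i.
Proof. by rewrite /salpha rowE alpha_coordK. Qed.

Lemma alpha_coord_refl i mu : alpha_coord (refl i mu) = alpha_coord mu - mu 0 i *: 'e_i.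
Proof. by rewrite raddfB; congr (_ - _); rewrite -alpha_coord_salpha /= scalemxAl. Qed.

Lemma alpha_coord_refl_neq i j mu : j != i -> alpha_coord (refl i mu) 0 j = alpha_coord mu 0 j.
Proof.
move=> ji; rewrite alpha_coord_refl; move: (alpha_coord mu) => c.
by rewrite !mxE (negbTE ji) /= mulr0 subr0.
Qed.

Lemma refl_coord i mu : refl i mu 0 i = - mu 0 i.
Proof. by rewrite /refl !mxE eqxx; ring. Qed.

Lemma reflK i : involutive (refl i).
Proof. by move=> mu; rewrite {1}/refl refl_coord scaleNr opprK /refl subrK. Qed.

Section LexPositive.
Variables (I : Type) (R : realDomainType).

Fixpoint lexpos (s : seq I) (f : I -> R) : bool :=
  if s is j :: s' then (0 < f j) || ((f j == 0) && lexpos s' f) else false.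

Lemma eq_lexpos s f g : f =1 g -> lexpos s f = lexpos s g.
Proof. by move=> fg; elim: s => //= j s ->; rewrite fg. Qed.

Lemma lexposD s f g : lexpos s f -> lexpos s g -> lexpos s (f \+ g).
Proof.
elim: s => //= j s IH /orP[fj|/andP[/eqP fj0 fs]] /orP[gj|/andP[/eqP gj0 gs]].
- by rewrite addr_gt0.
- by rewrite gj0 addr0 fj.
- by rewrite fj0 add0r gj.
- by rewrite fj0 gj0 addr0 eqxx IH ?orbT.
Qed.

Lemma lexpos0 s : ~~ lexpos s (fun=> 0).
Proof. by elim: s => //= j s IH; rewrite ltxx eqxx. Qed.

Lemma lexpos_total s f :
  has (fun j => f j != 0) s -> lexpos s f || lexpos s (fun j => - f j).
Proof.
elim: s => //= j s IH; have [fj0|fj_neq0 _] := eqVneq (f j) 0.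
  by rewrite fj0 oppr0 ltxx eqxx /= => /IH.
case/lt_total/orP: fj_neq0 => [fj_lt0|->//].
have ->: 0 < - f j by rewrite oppr_gt0.
by rewrite orbT.
Qed.

Lemma lexpos_ge0 s f : (forall j, 0 <= f j) -> has (fun j => 0 < f j) s -> lexpos s f.
Proof.
move=> f_ge0; elim: s => //= j s IH.
by case: (ltP 0 (f j)) => //= fj_le0 /IH ->; rewrite andbT eq_le fj_le0 f_ge0.
Qed.

End LexPositive.

Definition pos_lex (k : 'I_8) (d : wt) : bool := lexpos (k :: enum 'I_8) (alpha_coord d 0).

Section PosLex.
Variable k : 'I_8.

Lemma pos_lexD a b : pos_lex k a -> pos_lex k b -> pos_lex k (a + b).
Proof.
move=> ka kb; rewrite /pos_lex (@eq_lexpos _ _ _ _ (alpha_coord a 0 \+ alpha_coord b 0)).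
  exact: lexposD.
by move=> j; rewrite raddfD mxE.
Qed.

Lemma pos_lex0 : ~~ pos_lex k 0.
Proof. by rewrite /pos_lex (@eq_lexpos _ _ _ _ (fun=> 0)) ?lexpos0 // => j; rewrite raddf0 mxE. Qed.

Lemma pos_lex_total d : d != 0 -> pos_lex k d || pos_lex k (- d).
Proof.
move=> d_neq0; rewrite /pos_lex.
rewrite (@eq_lexpos _ _ _ (alpha_coord (- d) 0) (fun j => - alpha_coord d 0 j)).
  apply: lexpos_total; apply: contraR d_neq0 => /hasPn all0.
  apply/eqP/alpha_coord_inj/rowP => j; rewrite raddf0 [RHS]mxE; apply/eqP/negbNE/all0.
  by rewrite in_cons mem_enum orbT.
by move=> j; rewrite raddfN mxE.
Qed.

Lemma pos_lex_salpha i c : 0 < c -> pos_lex k (c *: salpha i).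
Proof.
move=> c_gt0; rewrite /pos_lex linearZ alpha_coord_salpha; apply: lexpos_ge0.
  by move=> j; rewrite !mxE eqxx /=; case: (j == i); rewrite ?mulr1 ?mulr0 // ltW.
by apply/hasP; exists i; rewrite ?in_cons ?mem_enum ?orbT // !mxE !eqxx /= mulr1.
Qed.

Lemma pos_lex_le_coord a b : cone_le (pos_lex k) a b -> alpha_coord a 0 k <= alpha_coord b 0 k.
Proof.
case/orP=> [/eqP->//|]; rewrite /pos_lex -subr_ge0.
have -> : alpha_coord b 0 k - alpha_coord a 0 k = alpha_coord (b - a) 0 k by rewrite raddfB !mxE.
by case/orP=> [/ltW|/andP[/eqP-> _]].
Qed.

End PosLex.

Lemma is_rootE b : is_root b <-> qform CartanE8 (alpha_coord b) = 2.
Proof.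
split=> [[c [-> c2]]|b2]; first by rewrite alpha_coordK.
by exists (alpha_coord b); split; [rewrite alpha_coordKV | exact: b2].
Qed.

Lemma root_sign b : is_root b ->
  (forall j, 0 <= alpha_coord b 0 j) \/ (forall j, alpha_coord b 0 j <= 0).
Proof.
by move/is_rootE/(qform_eq2_sign tr_CartanE8 CartanE8_offdiag qform_CartanE8_ge2).
Qed.

Lemma root_refl i b : is_root b -> is_root (refl i b).
Proof.
rewrite !is_rootE; have := qform_refl tr_CartanE8 (alpha_coord b) (CartanE8_diag i).
by rewrite alpha_coordKV -alpha_coord_refl => ->.
Qed.

Lemma root_salpha i : is_root (salpha i).
Proof.
by rewrite is_rootE alpha_coord_salpha -['e_i]scale1r qform_unitZ CartanE8_diag.
Qed.

Definition pos_root (b : wt) : bool := [forall j, 0 <= alpha_coord b 0 j].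

Lemma pos_root_salpha i : pos_root (salpha i).
Proof. by apply/forallP => j; rewrite alpha_coord_salpha mxE; case: (_ && _). Qed.

Lemma pos_root_unit i b : is_root b -> pos_root b ->
  (forall j, j != i -> alpha_coord b 0 j = 0) -> b = salpha i.
Proof.
move=> /is_rootE b2 /forallP b_ge0 b_off.
have b_i : alpha_coord b = alpha_coord b 0 i *: 'e_i.
  apply/rowP => j; rewrite [in RHS]mxE [X in _ = _ * X]mxE eqxx /=.
  by have [->|ji] := eqVneq j i; rewrite ?mulr1 // b_off ?mulr0.
have := qform_unitZ CartanE8 (alpha_coord b 0 i) i; rewrite -b_i b2 CartanE8_diag => bii.
have bi1 : alpha_coord b 0 i = 1 by have := b_ge0 i; nia.
by apply: alpha_coord_inj; rewrite b_i bi1 scale1r alpha_coord_salpha.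
Qed.

Section Roots.
Variable rts : seq wt.
Hypothesis rts_uniq : uniq rts.
Hypothesis rtsP : forall beta, beta \in rts <-> is_root beta.

Lemma refl_pos_root i b : b \in rts -> pos_root b -> b != salpha i ->
  [&& refl i b \in rts, pos_root (refl i b) & refl i b != salpha i].
Proof.
move=> /rtsP b_root b_pos b_neq; have rb_root := root_refl i b_root.
have b_ge0 : forall j, 0 <= alpha_coord b 0 j by apply/forallP.
apply/and3P; split; first exact/rtsP.
  have /exists_inP[j ji bj] : [exists (j | j != i), 0 < alpha_coord b 0 j].
    move: b_neq; apply: contraNT => /exists_inPn b_off.
    apply/eqP/pos_root_unit => // j ji; apply/eqP.
    by rewrite eq_le b_ge0 andbT leNgt b_off.
  case: (root_sign rb_root) => [rb_ge0|rb_le0]; first exact/forallP.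
  by have := rb_le0 j; rewrite alpha_coord_refl_neq // leNgt bj.
apply/eqP => rb; have := b_ge0 i.
by rewrite -(reflK i b) rb alpha_coord_refl alpha_coord_salpha /salpha !mxE !eqxx.
Qed.

Lemma sum_pos_roots : \sum_(b <- rts | pos_root b) b = 2 *: rho.
Proof.
apply/rowP => i; rewrite !mxE mulr1.
pose F := [seq b <- [seq b <- rts | pos_root b] | b != salpha i].
have salpha_pos : salpha i \in [seq b <- rts | pos_root b].
  by rewrite mem_filter pos_root_salpha; apply/rtsP/root_salpha.
have sum_split : \sum_(b <- rts | pos_root b) b = salpha i + \sum_(b <- F) b.
  by rewrite -big_filter (bigD1_seq (salpha i)) ?filter_uniq // big_filter.
have memF b : (b \in F) = [&& b \in rts, pos_root b & b != salpha i].
  by rewrite !mem_filter; case: (b \in rts); case: (pos_root b); case: (b != salpha i).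
have reflF b : b \in F -> refl i b \in F.
  by rewrite !memF => /and3P[]; apply: refl_pos_root.
have reflF_perm : perm_eq [seq refl i b | b <- F] F.
  apply: uniq_perm; rewrite ?map_inj_uniq ?filter_uniq //; first exact: can_inj (reflK i).
  move=> b; apply/mapP/idP => [[b' /reflF b'F ->] // | /reflF bF].
  by exists (refl i b); rewrite ?reflK.
have sumF_i : \sum_(b <- F) b 0 i = 0.
  have : \sum_(b <- [seq refl i b | b <- F]) b 0 i = \sum_(b <- F) b 0 i.
    exact: perm_big reflF_perm.
  rewrite big_map.
  under eq_bigr do rewrite refl_coord.
  by rewrite sumrN => /eqP; rewrite eq_sym -subr_eq0 opprK -mulr2n mulrn_eq0 => /eqP.
by rewrite sum_split mxE summxE sumF_i addr0 /salpha mxE CartanE8_diag.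
Qed.

Lemma sum_pos_part_adjoint k :
  \sum_(w <- adjoint_weights rts) Num.max (alpha_coord w 0 k) 0 = alpha_coord (2 *: rho) 0 k.
Proof.
have nseq0 : \sum_(w <- nseq 8 (0 : wt)) Num.max (alpha_coord w 0 k) 0 = 0.
  by apply: big1_seq => w; rewrite mem_nseq => /andP[_ /eqP->]; rewrite raddf0 mxE maxxx.
rewrite /adjoint_weights big_cat nseq0 Monoid.mulm1.
rewrite -sum_pos_roots raddf_sum summxE [RHS]big_mkcond.
apply: eq_big_seq => w /rtsP w_root; case: ifPn => [/forallP w_ge0|w_neg].
  exact/max_idPl.
apply/max_idPr; case: (root_sign w_root) => // w_ge0.
by move: w_neg; rewrite /pos_root; have -> : [forall j, 0 <= alpha_coord w 0 j] by apply/forallP.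
Qed.

End Roots.

Lemma elemsym_weight_le (phi : wt -> int) : {morph phi : a b / a + b} ->
  forall n ws p, p \in elemsym n ws -> phi p.1 <= \sum_(w <- ws) Num.max (phi w) 0.
Proof.
move=> phiD; have phi0 : phi 0 = 0 by apply: (addrI (phi 0)); rewrite -phiD !addr0.
have pos_part_ge0 ws : 0 <= \sum_(w <- ws) Num.max (phi w) 0.
  by apply: sumr_ge0 => w _; rewrite le_max lexx orbT.
move=> n ws; elim: ws n => [|w ws IH] [|n] p //=.
- by rewrite mem_seq1 => /eqP->; rewrite phi0 big_nil.
- by rewrite mem_seq1 => /eqP->; rewrite phi0.
rewrite big_cons mem_cat => /orP[/IH p_le|].
  by apply: le_trans p_le _; rewrite lerDr le_max lexx orbT.
rewrite /emul /eexp /= cats0 => /mapP[q /IH q_le ->] /=.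
by rewrite phiD lerD // le_max lexx.
Qed.

Definition expo_wt (iota : expo) : wt := \row_j (iota j)%:Z.

Lemma expo_wt_inj : injective expo_wt.
Proof.
move=> a b /rowP ab; apply/ffunP => j.
by have := ab j; rewrite !mxE => /eqP; rewrite eqz_nat => /eqP.
Qed.

Lemma sum_omega (iota : expo) : \sum_(l <- enum 'I_8) omega l *+ iota l = expo_wt iota.
Proof.
apply/rowP => j; rewrite summxE (bigD1_seq j) ?mem_enum ?enum_uniq //= big1_seq.
  by rewrite addr0 mulmxnE !mxE eqxx natz.
by move=> l /andP[lj _]; rewrite mulmxnE !mxE eq_sym (negbTE lj) mul0rn.
Qed.

Lemma emonom_lead k chi : (forall l, irr_char (omega l) (chi l)) ->
  forall iota, lead_term (pos_lex k) (emonom chi iota) (expo_wt iota).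
Proof.
move=> chiP iota; rewrite -sum_omega.
apply: (lead_term_prod (@pos_lexD k) (pos_lex0 k)) => l.
apply: (lead_term_epow (@pos_lexD k) (pos_lex0 k)).
exact: (irr_char_lead (@pos_lexD k) (pos_lex0 k) (@pos_lex_total k) (@pos_lex_salpha k)).
Qed.

Lemma expand_top_weight k chi S N iota :
  (forall l, irr_char (omega l) (chi l)) -> uniq S -> iota \in S -> N iota != 0 ->
  exists2 y, cone_le (pos_lex k) (expo_wt iota) (expo_wt y)
           & coef (expand chi S N) (expo_wt y) != 0.
Proof.
move=> chiP S_uniq iotaS N_iota; pose S' := [seq x <- S | N x != 0].
have iotaS' : iota \in S' by rewrite mem_filter N_iota.
have S'_nil : S' != [::] by apply/eqP => S'0; rewrite S'0 in iotaS'.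
have [y yS' y_max] := cone_exists_max (@pos_lexD k) (@pos_lex_total k) expo_wt S'_nil.
move: yS'; rewrite mem_filter => /andP[N_y yS].
exists y; first exact: y_max.
rewrite /expand (coef_lincomb_max (@pos_lexD k) (pos_lex0 k)) //.
- exact: expo_wt_inj.
- exact: emonom_lead.
by move=> x xS N_x; apply: y_max; rewrite mem_filter N_x.
Qed.

Lemma admissibleE iota :
  admissible iota <-> forall k, alpha_coord (expo_wt iota) 0 k <= alpha_coord (2 *: rho) 0 k.
Proof.
suff coordE k : (\sum_(j < 8) (iota j)%:R * e_coef j k <= 2 * \sum_(j < 8) e_coef j k)
              = (alpha_coord (expo_wt iota) 0 k <= alpha_coord (2 *: rho) 0 k).
  by split=> adm k; [rewrite -coordE | rewrite coordE]; apply: adm.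
rewrite -(ler_int rat) !mxE !rmorph_sum big_distrr /=.
by congr (_ <= _); apply: eq_bigr => j _; rewrite /e_coef CinvE8E !mxE rmorphM.
Qed.

Theorem lemma2p3 (chi : 'I_8 -> elt)
  (Hchi : forall l : 'I_8, irr_char (omega l) (chi l))
  (rts : seq wt) (Hrts_uniq : uniq rts)
  (Hrts : forall beta : wt, beta \in rts <-> is_root beta)
  (k : nat) (Hk : (k <= 248)%N)
  (S : seq expo) (N : expo -> int)
  (HS : uniq S) (HN : forall iota : expo, iota \notin S -> N iota = 0)
  (Hexp : eeq (elemsym k (adjoint_weights rts)) (expand chi S N)) :
  forall iota : expo, ~ admissible iota -> N iota = 0.
Proof.
move=> iota not_adm; apply/eqP; apply: contraT => N_iota.
have /existsP[j iota_big] : [exists j, alpha_coord (2 *: rho) 0 j < alpha_coord (expo_wt iota) 0 j].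
  apply: contraT => /existsPn small; exfalso; apply/not_adm/admissibleE => j.
  by rewrite leNgt small.
have iotaS : iota \in S by apply: contraR N_iota => /HN ->; rewrite eqxx.
have [y iota_y] := expand_top_weight j Hchi HS iotaS N_iota.
rewrite -Hexp => /coef_neq0_mem/mapP[p p_in p_y].
have y_le : alpha_coord (expo_wt y) 0 j <= alpha_coord (2 *: rho) 0 j.
  rewrite p_y -(sum_pos_part_adjoint Hrts_uniq Hrts).
  by apply: elemsym_weight_le p_in => a b; rewrite raddfD mxE.
by have := le_trans (pos_lex_le_coord iota_y) y_le; rewrite leNgt iota_big.
Qed.
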